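(* Let $G$ be a topological group admitting an unbounded lower semi-continuous invariant length function. Then $G$ fails topological bounded normal generation.
   Context: A lower semi-continuous invariant length function on $G$ is a map $l:G\to[0,+\infty]$ with $l(1_G)=0$, $l(g^{-1})=l(g)$, $l(gh)\le l(g)+l(h)$, $l(ghg^{-1})=l(h)$ for all $g,h\in G$, and such that $l^{-1}([0,r])$ is closed for every $r\ge0$. It is unbounded if for every $K\in\mathbb N$ there is $g\in G$ with $l(g)\in\,]K,+\infty[$. For $g\in G$, $g^{\pm G}=\{hgh^{-1}:h\in G\}\cup\{hg^{-1}h^{-1}:h\in G\}$; $A^{\cdot n}$ is the set of products of $n$ elements of $A$. $G$ has topological bounded normal generation if for every nontrivial $g\in G$ there is $n(g)\in\mathbb N$ with $\overline{(g^{\pm G})^{\cdot n(g)}}=G$. *)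

From HB Require Import structures.
From mathcomp Require Import all_boot all_order all_algebra.
From mathcomp Require Import all_classical all_reals all_analysis.
Set Implicit Arguments. Unset Strict Implicit. Unset Printing Implicit Defensive.
Import Order.TTheory GRing.Theory Num.Theory.
Local Open Scope classical_set_scope.
Local Open Scope ring_scope.

Record topGroup (T : topologicalType) := TopGroup {
  tg_mul : T -> T -> T;
  tg_inv : T -> T;
  tg_one : T;
  tg_mulA : forall x y z, tg_mul x (tg_mul y z) = tg_mul (tg_mul x y) z;
  tg_mul1g : forall x, tg_mul tg_one x = x;
  tg_mulg1 : forall x, tg_mul x tg_one = x;
  tg_mulVg : forall x, tg_mul (tg_inv x) x = tg_one;
  tg_mulgV : forall x, tg_mul x (tg_inv x) = tg_one;
  tg_mul_cont : continuous (fun p : T * T => tg_mul p.1 p.2);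
  tg_inv_cont : continuous tg_inv
}.

Section Defs.
Context {T : topologicalType} (G : topGroup T).
Local Notation mul := (tg_mul G).
Local Notation inv := (tg_inv G).
Local Notation one := (tg_one G).

Definition lsc_invariant_length {R : realType} (l : T -> \bar R) : Prop :=
  [/\ (forall g, (0 <= l g)%E) /\ l one = 0%E,
      (forall g, l (inv g) = l g),
      (forall g h, (l (mul g h) <= l g + l h)%E),
      (forall g h, l (mul (mul g h) (inv g)) = l h)
    & (forall r : R, 0 <= r -> closed [set g | (l g <= r%:E)%E])].

Definition unbounded_length {R : realType} (l : T -> \bar R) : Prop :=
  forall K : nat, exists g, (K%:R%:E < l g)%E /\ (l g < +oo)%E.

Definition conj_pm (g : T) : set T :=
  [set x | exists h, x = mul (mul h g) (inv h)] `|` [set x | exists h, x = mul (mul h (inv g)) (inv h)].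

Fixpoint prodn (A : set T) (n : nat) : set T :=
  match n with
  | 0 => [set one]
  | n.+1 => [set x | exists a b, [/\ A a, prodn A n b & x = mul a b]]
  end.

Definition top_bounded_normal_generation : Prop :=
  forall g, g <> one ->
    exists n : nat, (0 < n)%N /\ closure (prodn (conj_pm g) n) = setT.

End Defs.

From mathcomp Require Import all_boot all_order all_algebra.
From mathcomp Require Import all_classical all_reals all_analysis.
Import Order.TTheory GRing.Theory Num.Theory.
Local Open Scope classical_set_scope.
Local Open Scope ring_scope.

Set Implicit Arguments.
Unset Strict Implicit.
Unset Printing Implicit Defensive.

(* Every element of g^{±G} has length l g, so by subadditivity every product
   of n of them has length at most n * l g.  Lower semi-continuity makes the
   sublevel set of level n * l g closed, so it contains the closure of these
   products; if that closure is all of G, the length is bounded.  Taking g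
   of finite positive length contradicts unboundedness. *)

Section InvariantLength.
Variables (R : realType) (T : topologicalType) (G : topGroup T).
Variable l : T -> \bar R.

Local Notation mul := (tg_mul G).
Local Notation inv := (tg_inv G).

Hypothesis l_one : l (tg_one G) = 0%E.
Hypothesis l_inv : forall g, l (inv g) = l g.
Hypothesis l_subadd : forall g h, (l (mul g h) <= l g + l h)%E.
Hypothesis l_conj : forall g h, l (mul (mul g h) (inv g)) = l h.
Hypothesis l_sublevel_closed :
  forall r : R, 0 <= r -> closed [set g | (l g <= r%:E)%E].

Lemma length_conj_pm g x : conj_pm G g x -> l x = l g.
Proof. by case=> -[h ->]; rewrite l_conj ?l_inv. Qed.

Lemma length_prodn_le (A : set T) (r : R) m x :
  (forall a, A a -> (l a <= r%:E)%E) -> prodn G A m x ->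
  (l x <= (m%:R * r)%:E)%E.
Proof.
move=> lA; elim: m x => [|m IH] x /=; first by move->; rewrite l_one mul0r.
case=> a [b [Aa Ab ->]]; apply: le_trans (l_subadd a b) _.
by rewrite mulrSr mulrDl mul1r addrC EFinD leeD ?lA ?IH.
Qed.

Lemma closure_length_le (A : set T) (r : R) :
  0 <= r -> (forall a, A a -> (l a <= r%:E)%E) ->
  closure A `<=` [set x | (l x <= r%:E)%E].
Proof.
move=> r_ge0 lA; rewrite [X in _ `<=` X](closure_id _).1.
  exact: closureS.
exact: l_sublevel_closed.
Qed.

End InvariantLength.

Lemma unbounded_length_not_le (R : realType) (T : topologicalType) (l : T -> \bar R) :
  unbounded_length l -> ~ exists r : R, forall x, (l x <= r%:E)%E.
Proof.
move=> unb [r lr]; have [x [rx _]] := unb (Num.Def.truncn r).+1.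
have := lt_le_trans rx (lr x); rewrite lte_fin => /(lt_trans (truncnS_gt r)).
by rewrite ltxx.
Qed.

Theorem mainTheorem6 (R : realType) (T : topologicalType) (G : topGroup T)
  (l : T -> \bar R) :
  lsc_invariant_length G l -> unbounded_length l ->
  ~ top_bounded_normal_generation G.
Proof.
move=> [[l_ge0 l_one] l_inv l_subadd l_conj l_closed] unb tbng.
have [g [g_pos g_fin]] := unb 0%N.
have lgE : l g = (fine (l g))%:E by rewrite fineK // ge0_fin_numE.
have g_ne1 : g <> tg_one G by move=> g1; move: g_pos; rewrite g1 l_one ltxx.
have [n [_ gen]] := tbng g g_ne1.
apply: (unbounded_length_not_le unb); exists (n%:R * fine (l g)) => x.
apply: (closure_length_le l_closed _ _ (A := prodn G (conj_pm G g) n)).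
- by rewrite mulr_ge0 // -lee_fin -lgE.
- move=> y; apply: length_prodn_le => // a /(length_conj_pm l_inv l_conj).
  by rewrite -lgE => ->.
- by rewrite gen.
Qed.
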